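(* Let $A_S$ be a parabolic-retractable Artin group with Coxeter matrix $(m_{s,t})_{s,t\in S}$, and let $a,b,c\in S$ be pairwise distinct. If $m_{a,b}$ and $m_{a,c}$ are odd, then $m_{b,c}$ is also odd.
   Context: A Coxeter matrix over a finite set $S$ is a matrix $M=(m_{s,t})_{s,t\in S}$ with entries in $\mathbb{N}\cup\{\infty\}$, $m_{s,s}=1$, and $m_{s,t}=m_{t,s}\ge 2$ for $s\neq t$. Write $\Pi(s,t,m)$ for the alternating word $sts\cdots$ of length $m$. The Artin group is $A_S=\langle S\mid \Pi(s,t,m_{s,t})=\Pi(t,s,m_{s,t})$ for $s\neq t$, $m_{s,t}\neq\infty\rangle$. For $X\subseteq S$, $A_X$ is the subgroup generated by $X$. A retraction of $G$ onto a subgroup $H$ is a homomorphism $\varphi:G\to H$ with $\varphi|_H=\mathrm{id}_H$. $A_S$ is parabolic-retractable if it admits a retraction onto $A_X$ for every $X\subseteq S$. ''Odd'' means a finite odd integer ($\infty$ is not odd). *)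

(* Artin groups presented as words modulo the congruence
   generated by free reduction and the Artin relations (a setoid model). *)
From mathcomp Require Import all_boot.
Set Implicit Arguments. Unset Strict Implicit. Unset Printing Implicit Defensive.

(* Coxeter matrix entries: [Some k] is the finite value k, [None] is infinity. *)
Definition coxeter_matrix (S : finType) (m : S -> S -> option nat) : Prop :=
  (forall s, m s s = Some 1) /\
  (forall s t, m s t = m t s) /\
  (forall s t, s != t -> forall k, m s t = Some k -> 2 <= k).

(* A letter (s, e): s if e = false, s^-1 if e = true. *)
Definition letter (S : finType) := (S * bool)%type.
Definition word (S : finType) := seq (letter S).

Definition Pi (S : finType) (s t : S) (k : nat) : word S :=
  mkseq (fun i => (if odd i then t else s, false)) k.

Inductive artin_eq (S : finType) (m : S -> S -> option nat) : word S -> word S -> Prop :=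
| ae_refl u : artin_eq m u u
| ae_sym u v : artin_eq m u v -> artin_eq m v u
| ae_trans u v w : artin_eq m u v -> artin_eq m v w -> artin_eq m u w
| ae_ctx p q u v : artin_eq m u v -> artin_eq m (p ++ u ++ q) (p ++ v ++ q)
| ae_free s e : artin_eq m [:: (s, e); (s, ~~ e)] [::]
| ae_rel s t k : s != t -> m s t = Some k -> artin_eq m (Pi s t k) (Pi t s k).

Definition word_over (S : finType) (X : {set S}) (w : word S) : bool :=
  all (fun l => l.1 \in X) w.

(* phi (acting on representatives) is a retraction of A_S onto A_X:
   a well-defined group homomorphism A_S -> A_S with image in A_X,
   restricting to the identity on A_X. *)
Definition is_retraction (S : finType) (m : S -> S -> option nat) (X : {set S})
    (phi : word S -> word S) : Prop :=
  (forall u v, artin_eq m u v -> artin_eq m (phi u) (phi v)) /\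
  (forall u v, artin_eq m (phi (u ++ v)) (phi u ++ phi v)) /\
  (forall w, exists w', word_over X w' /\ artin_eq m (phi w) w') /\
  (forall w, word_over X w -> artin_eq m (phi w) w).

Definition parabolic_retractable (S : finType) (m : S -> S -> option nat) : Prop :=
  forall X : {set S}, exists phi : word S -> word S, is_retraction m X phi.

(* "odd": a finite odd integer; infinity is not odd *)
Definition odd_entry (k : option nat) : bool :=
  if k is Some n then odd n else false.

From mathcomp Require Import all_boot all_algebra algC cyclotomic.
From mathcomp Require Import ring.
Set Implicit Arguments. Unset Strict Implicit. Unset Printing Implicit Defensive.
Import GRing.Theory Num.Theory.

(* Let every generator s act on algC^S by the reflection
   v |-> v - <alpha_s^v, v> alpha_s for the Cartan-type matrix with 2 on the
   diagonal, -(zeta + zeta^-1) (zeta a primitive k-th root of unity) for an odd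
   label k, and 0 for even or infinite labels.  This is a representation of
   A_S, and when m_{b,c} is not odd, b and c act by distinct commuting
   involutions.  For a retraction phi onto A_{b,c}, the image F of phi(a) is then
   a product of commuting involutions, so it commutes with b; the braid
   relation of odd length 2j+1 between a and b becomes F^(j+1) b^j = b^(j+1) F^j,
   whence F = b.  Likewise F = c, a contradiction. *)

Section Alternation.
Variable T : Type.
Implicit Types f g : T -> T.

Fixpoint alt f g n : T -> T := if n is n'.+1 then f \o alt g f n' else id.

Lemma eq_alt f f' g g' n : f =1 f' -> g =1 g' -> alt f g n =1 alt f' g' n.
Proof.
by elim: n f g f' g' => [|n IH] f g f' g' ef eg v //=; rewrite ef (IH _ _ _ _ eg ef).
Qed.

Lemma alt_double f g n : alt f g n.*2 =1 iter n (f \o g).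
Proof. by elim: n => [|n IH] v //; rewrite doubleS /= IH. Qed.

Lemma iter_cancel f g n : cancel f g -> cancel (iter n f) (iter n g).
Proof. by move=> fK; elim: n => // n IH x; rewrite iterSr /= fK. Qed.

Lemma iter_comp_rot f g n x : f (iter n (g \o f) x) = iter n (f \o g) (f x).
Proof. by elim: n => // n IH /=; rewrite IH. Qed.

Lemma alt_even_braid f g n : f \o g =1 g \o f -> alt f g n.*2 =1 alt g f n.*2.
Proof. by move=> fg v; rewrite !alt_double; apply: eq_iter. Qed.

Lemma alt_odd_braid f g n : involutive f -> involutive g ->
  iter n.*2.+1 (f \o g) =1 id -> alt f g n.*2.+1 =1 alt g f n.*2.+1.
Proof.
move=> fK gK fg_order v /=; rewrite !alt_double.
rewrite (iter_comp_rot f g n v) (iter_comp_rot g f n v).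
have := fg_order (g v); rewrite iterSr /= gK -addnn iterD => <-.
have fgK : cancel (f \o g) (g \o f) by move=> y /=; rewrite fK gK.
by rewrite (iter_cancel n fgK).
Qed.

Lemma alt_odd_commute_eq f g fi n : f \o g =1 g \o f -> cancel fi f ->
  involutive g -> alt f g n.*2.+1 =1 alt g f n.*2.+1 -> f =1 g.
Proof.
move=> fg fiK gK braid x; pose h := iter n (f \o g).
have hK : cancel (iter n (g \o fi)) h.
  by apply: iter_cancel => y /=; rewrite gK fiK.
have fh y : f (h y) = g (h y).
  by have := braid y; rewrite /= !alt_double -(eq_iter fg).
by rewrite -(hK x) fh.
Qed.

End Alternation.

Lemma PiS (S : finType) (s t : S) n : Pi s t n.+1 = (s, false) :: Pi t s n.
Proof.
rewrite /Pi /mkseq /= (iotaDl 1 0 n) -map_comp.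
by congr (_ :: _); apply: eq_map => i /=; case: (odd i).
Qed.

Section WordAction.
Variables (S : finType) (T : Type) (r : S -> T -> T).

(* The exponent of a letter is ignored: r s is meant to be an involution. *)
Definition word_act (w : word S) (v : T) : T := foldr (fun l => r l.1) v w.

Lemma word_act_cat u w v : word_act (u ++ w) v = word_act u (word_act w v).
Proof. exact: foldr_cat. Qed.

Lemma word_act_Pi s t n : word_act (Pi s t n) =1 alt (r s) (r t) n.
Proof. by elim: n s t => // n IH s t v; rewrite PiS /= IH. Qed.

Lemma word_act_revK w : (forall s, involutive (r s)) ->
  cancel (word_act (rev w)) (word_act w).
Proof.
move=> rK; elim: w => // l w IH v.
rewrite rev_cons -cats1 word_act_cat.
exact: etrans (congr1 (r l.1) (IH _)) (rK _ v).
Qed.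

Lemma word_act_over_commute (X : {set S}) q w :
  {in X, forall s, r s \o r q =1 r q \o r s} -> word_over X w ->
  word_act w \o r q =1 r q \o word_act w.
Proof.
move=> Xq; elim: w => // l w IH /andP[lX wX] v.
by have /= -> := IH wX v; apply: Xq.
Qed.

Variable m : S -> S -> option nat.
Hypothesis r_invol : forall s, involutive (r s).
Hypothesis r_braid : forall s t k, s != t -> m s t = Some k ->
  alt (r s) (r t) k =1 alt (r t) (r s) k.

Lemma word_act_artin_eq u w : artin_eq m u w -> word_act u =1 word_act w.
Proof.
elim=> {u w} [u|u w _ IH|u w x _ IH1 _ IH2|p q u w _ IH|s e|s t k st mst] v.
- by [].
- by rewrite IH.
- by rewrite IH1 IH2.
- by rewrite !word_act_cat IH.
- exact: r_invol.
- by rewrite !word_act_Pi r_braid.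
Qed.

Section Retraction.
Variables (X : {set S}) (phi : word S -> word S).
Hypothesis phiP : is_retraction m X phi.
Hypothesis r_commX : {in X &, forall s t, r s \o r t =1 r t \o r s}.

Lemma word_act_retraction_Pi s t n :
  word_act (phi (Pi s t n)) =1
  alt (word_act (phi [:: (s, false)])) (word_act (phi [:: (t, false)])) n.
Proof.
have [_ [phiM [_ phi_id]]] := phiP.
elim: n s t => [|n IH] s t v /=.
  by rewrite (word_act_artin_eq (phi_id [::] isT)).
by rewrite PiS -cat1s (word_act_artin_eq (phiM _ _)) word_act_cat IH.
Qed.

Lemma retraction_odd_image a s : a != s -> s \in X -> odd_entry (m a s) ->
  word_act (phi [:: (a, false)]) =1 r s.
Proof.
move=> as_neq sX; case mas: (m a s) => [k|] //= k_odd.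
have [j k_eq] : exists j, k = j.*2.+1.
  by exists k./2; rewrite -{1}(odd_double_half k) k_odd.
have [phi_eq [_ [phi_over phi_id]]] := phiP.
have [wa [waX phi_a]] := phi_over [:: (a, false)].
have img_s : word_act (phi [:: (s, false)]) =1 r s.
  move=> v; apply: (word_act_artin_eq (phi_id [:: (s, false)] _)).
  by rewrite /word_over /= sX.
move=> v; rewrite (word_act_artin_eq phi_a).
apply: (@alt_odd_commute_eq _ _ _ (word_act (rev wa)) j).
- by apply: word_act_over_commute waX => q qX; apply: r_commX.
- exact: word_act_revK.
- exact: r_invol.
- move=> x; have := word_act_artin_eq (phi_eq _ _ (ae_rel as_neq mas)) x.
  rewrite !word_act_retraction_Pi k_eq => braid.
  rewrite -(eq_alt _ (word_act_artin_eq phi_a) img_s) braid.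
  exact: eq_alt _ img_s (word_act_artin_eq phi_a) x.
Qed.

End Retraction.
End WordAction.

Local Open Scope ring_scope.

Section Reflection.
Variables (R : comNzRingType) (S : finType) (A : S -> S -> R).
Notation V := {ffun S -> R^o}.

Definition simple_root (s : S) : V := [ffun u => (u == s)%:R].
Definition coroot (s : S) (v : V) : R := \sum_u A s u * v u.
Definition refl (s : S) (v : V) : V := v - coroot s v *: simple_root s.

Lemma corootD s v w : coroot s (v + w) = coroot s v + coroot s w.
Proof. by rewrite /coroot -big_split; apply: eq_bigr => u _; rewrite ffunE mulrDr. Qed.

Lemma corootB s v w : coroot s (v - w) = coroot s v - coroot s w.
Proof. by rewrite /coroot -sumrB; apply: eq_bigr => u _; rewrite !ffunE mulrBr. Qed.

Lemma corootZ s c v : coroot s (c *: v) = c * coroot s v.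
Proof. by rewrite /coroot mulr_sumr; apply: eq_bigr => u _; rewrite ffunE mulrCA. Qed.

Lemma coroot_root s t : coroot s (simple_root t) = A s t.
Proof.
rewrite /coroot (bigD1 t) //= ffunE eqxx mulr1 big1 ?addr0 // => u /negbTE.
by rewrite ffunE => ->; rewrite mulr0.
Qed.

Lemma reflD s v w : refl s (v + w) = refl s v + refl s w.
Proof. by rewrite /refl corootD scalerDl opprD addrACA. Qed.

Lemma reflZ s c v : refl s (c *: v) = c *: refl s v.
Proof. by rewrite /refl corootZ scalerBr scalerA. Qed.

Lemma coroot_refl s t v : coroot s (refl t v) = coroot s v - coroot t v * A s t.
Proof. by rewrite /refl corootB corootZ coroot_root. Qed.

Lemma refl_fixed s v : coroot s v = 0 -> refl s v = v.
Proof. by move=> h; rewrite /refl h scale0r subr0. Qed.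

Lemma reflK s : A s s = 2 -> involutive (refl s).
Proof.
move=> Ass v; rewrite {1}/refl coroot_refl Ass /refl; apply/ffunP => u.
by rewrite !ffunE /GRing.scale /=; ring.
Qed.

Lemma refl_commute s t : A s t = 0 -> A t s = 0 ->
  refl s \o refl t =1 refl t \o refl s.
Proof.
move=> Ast Ats v /=; rewrite {1}/refl {3}/refl !coroot_refl Ast Ats !mulr0 !subr0.
by rewrite /refl; apply/ffunP => u; rewrite !ffunE /GRing.scale /=; ring.
Qed.

Lemma refl_simple_root_neq s t : 2 != 0 :> R -> A s s = 2 -> A t s = 0 ->
  refl s (simple_root s) != refl t (simple_root s).
Proof.
move=> two_neq0 Ass Ats; rewrite [refl t _]refl_fixed ?coroot_root //.
apply: contra two_neq0; rewrite /refl coroot_root Ass => /eqP/ffunP/(_ s).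
rewrite !ffunE eqxx /GRing.scale /= mulr1 => /eqP.
by rewrite -subr_eq0 addrAC subrr sub0r oppr_eq0.
Qed.

End Reflection.

Arguments simple_root {R S} s.

Section Rotation.
Variables (R : fieldType) (S : finType) (A : S -> S -> R) (s t : S) (z : R).
Hypotheses (Ass : A s s = 2) (Att : A t t = 2)
  (Ast : A s t = - (z + z^-1)) (Ats : A t s = - (z + z^-1))
  (z_neq0 : z != 0) (z2_neq1 : z ^+ 2 != 1).
Notation V := {ffun S -> R^o}.

(* x1 and x2 are eigenvectors of the rotation with eigenvalues z^2 and z^-2. *)
Let rot : V -> V := refl A s \o refl A t.
Let x1 : V := simple_root s + z^-1 *: simple_root t.
Let x2 : V := simple_root s + z *: simple_root t.

Lemma coroot_eigvecs :
  [/\ coroot A s x1 = 1 - z^-2, coroot A t x1 = z^-1 - z,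
      coroot A s x2 = 1 - z ^+ 2 & coroot A t x2 = z - z^-1].
Proof.
rewrite /x1 /x2 !corootD !corootZ !coroot_root Ass Att Ast Ats.
by split; field.
Qed.

Lemma refl_t_x1 : refl A t x1 = x2.
Proof.
rewrite /refl; have [_ -> _ _] := coroot_eigvecs; apply/ffunP => u.
rewrite !ffunE /GRing.scale /=.
by move: (u == s)%:R (u == t)%:R => es et; field.
Qed.

Lemma refl_t_x2 : refl A t x2 = x1.
Proof.
rewrite /refl; have [_ _ _ ->] := coroot_eigvecs; apply/ffunP => u.
rewrite !ffunE /GRing.scale /=.
by move: (u == s)%:R (u == t)%:R => es et; field.
Qed.

Lemma refl_s_x1 : refl A s x1 = z^-2 *: x2.
Proof.
rewrite /refl; have [-> _ _ _] := coroot_eigvecs; apply/ffunP => u.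
rewrite !ffunE /GRing.scale /=.
by move: (u == s)%:R (u == t)%:R => es et; field.
Qed.

Lemma refl_s_x2 : refl A s x2 = z ^+ 2 *: x1.
Proof.
rewrite /refl; have [_ _ -> _] := coroot_eigvecs; apply/ffunP => u.
rewrite !ffunE /GRing.scale /=.
by move: (u == s)%:R (u == t)%:R => es et; field.
Qed.

Lemma rotD v w : rot (v + w) = rot v + rot w.
Proof. by rewrite /rot /= [refl A t _]reflD reflD. Qed.

Lemma rotZ c v : rot (c *: v) = c *: rot v.
Proof. by rewrite /rot /= [refl A t _]reflZ reflZ. Qed.

Lemma rot_decomposition v : exists w c1 c2,
  [/\ v = w + (c1 *: x1 + c2 *: x2), coroot A s w = 0 & coroot A t w = 0].
Proof.
have zz_neq1 : z * z - 1 != 0 by rewrite subr_eq0 -expr2.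
pose p := coroot A s v; pose q := coroot A t v.
pose c1 := - ((p + z * q) / (z - z^-1) ^+ 2).
pose c2 := - ((p + z^-1 * q) / (z - z^-1) ^+ 2).
have [sx1 tx1 sx2 tx2] := coroot_eigvecs.
exists (v - (c1 *: x1 + c2 *: x2)), c1, c2; split; first by rewrite subrK.
all: rewrite corootB corootD !corootZ ?sx1 ?tx1 ?sx2 ?tx2 /c1 /c2 /p /q.
all: by field; rewrite z_neq0 zz_neq1.
Qed.

Lemma iter_refl_comp_id k : z ^+ k = 1 -> iter k (refl A s \o refl A t) =1 id.
Proof.
move=> zk v; have [w [c1 [c2 [-> ws wt]]]] := rot_decomposition v.
have rot_w : rot w = w by rewrite /rot /= !refl_fixed.
have rot_x1 : rot x1 = z ^+ 2 *: x1 by rewrite /rot /= refl_t_x1 refl_s_x2.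
have rot_x2 : rot x2 = z ^- 2 *: x2 by rewrite /rot /= refl_t_x2 refl_s_x1.
have iter_rot n : iter n rot (w + (c1 *: x1 + c2 *: x2)) =
    w + ((z ^+ 2 ^+ n * c1) *: x1 + (z ^- 2 ^+ n * c2) *: x2).
  elim: n => [|n IH]; first by rewrite !expr0 !mul1r.
  rewrite iterS IH !rotD !rotZ rot_w rot_x1 rot_x2 !scalerA.
  by congr (_ + (_ *: _ + _ *: _)); rewrite mulrAC -exprSr.
have z2k : z ^+ 2 ^+ k = 1 by rewrite -exprM mulnC exprM zk expr1n.
by rewrite iter_rot exprVn z2k invr1 !mul1r.
Qed.

End Rotation.

Definition prim_root (k : nat) : algC := sval (C_prim_root_exists (ltn0Sn k.-1)).

Lemma prim_rootP k : (0 < k)%N -> k.-primitive_root (prim_root k).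
Proof.
by move=> k_gt0; rewrite -{1}(prednK k_gt0); exact: svalP (C_prim_root_exists _).
Qed.

(* Even and infinite labels are replaced by 2 (entry 0); for an odd label k the
   entry -(zeta + zeta^-1) stands in for the usual -2 cos(pi/k). *)
Definition cox_form (S : finType) (m : S -> S -> option nat) (s t : S) : algC :=
  if s == t then 2 else
  if m s t is Some k then
    if odd k then - (prim_root k + (prim_root k)^-1) else 0
  else 0.

Section CoxForm.
Variables (S : finType) (m : S -> S -> option nat).
Hypothesis mP : coxeter_matrix m.
Let A := cox_form m.

Lemma cox_form_diag s : A s s = 2.
Proof. by rewrite /A /cox_form eqxx. Qed.

Lemma cox_form_reflK s : involutive (refl A s).
Proof. exact: reflK (cox_form_diag s). Qed.

Lemma cox_form_not_odd s t : s != t -> ~~ odd_entry (m s t) -> A s t = 0.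
Proof. by rewrite /A /cox_form => /negbTE->; case: (m s t) => // k /= /negbTE->. Qed.

Lemma cox_form_refl_commute s t : ~~ odd_entry (m s t) ->
  refl A s \o refl A t =1 refl A t \o refl A s.
Proof.
have [st|st] := eqVneq s t; first by move=> _ v; rewrite st.
have [_ [m_sym _]] := mP; move=> not_odd.
apply: refl_commute; apply: cox_form_not_odd => //.
- by rewrite eq_sym.
- by rewrite m_sym.
Qed.

Lemma cox_form_braid s t k : s != t -> m s t = Some k ->
  alt (refl A s) (refl A t) k =1 alt (refl A t) (refl A s) k.
Proof.
have [_ [m_sym m_ge2]] := mP.
move=> st mst; have ts : t != s by rewrite eq_sym.
have k_ge2 := m_ge2 _ _ st _ mst.
have [k_odd|k_even] := boolP (odd k); last first.
  rewrite -(odd_double_half k) (negbTE k_even); apply: alt_even_braid.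
  by apply: cox_form_refl_commute; rewrite mst.
have [j k_eq] : exists j, k = j.*2.+1.
  by exists k./2; rewrite -{1}(odd_double_half k) k_odd.
have z_prim := prim_rootP (ltn_trans (ltn0Sn 0) k_ge2).
set z := prim_root k in z_prim.
have zk : z ^+ k = 1 := prim_expr_order z_prim.
have z_neq0 : z != 0.
  by apply: contra_eq_neq zk => ->; rewrite expr0n k_eq eq_sym oner_neq0.
have z2_neq1 : z ^+ 2 != 1.
  rewrite -(prim_order_dvd z_prim); apply: contraL k_odd => /dvdn_leq k_le2.
  by have /eqP-> : k == 2%N by rewrite eqn_leq k_le2.
have mts : m t s = Some k by rewrite m_sym.
rewrite k_eq; apply: alt_odd_braid; rewrite -?k_eq; try exact: cox_form_reflK.
apply: (iter_refl_comp_id (z := z)) => //; rewrite ?cox_form_diag //.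
all: by rewrite /A /cox_form ?(negbTE st) ?(negbTE ts) ?mst ?mts k_odd.
Qed.

End CoxForm.

Theorem lemma3p2 (S : finType) (m : S -> S -> option nat)
  (hm : coxeter_matrix m) (hr : parabolic_retractable m)
  (a b c : S) (hab : a != b) (hac : a != c) (hbc : b != c) :
  odd_entry (m a b) -> odd_entry (m a c) -> odd_entry (m b c).
Proof.
move=> odd_ab odd_ac; apply: contraT => not_odd_bc.
pose A := cox_form m; pose X := [set b; c].
have [_ [m_sym _]] := hm.
have commX : {in X &, forall s t, refl A s \o refl A t =1 refl A t \o refl A s}.
  move=> s t; rewrite !inE => /orP[]/eqP-> /orP[]/eqP-> //.
    exact: cox_form_refl_commute.
  by apply: cox_form_refl_commute; rewrite // m_sym.
have [phi phiP] := hr X.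
have img s : a != s -> s \in X -> odd_entry (m a s) ->
    word_act (refl A) (phi [:: (a, false)]) =1 refl A s.
  apply: (retraction_odd_image (cox_form_reflK m) _ phiP commX).
  exact: cox_form_braid hm.
have two_neq0 : 2 != 0 :> algC by rewrite pnatr_eq0.
have bX : b \in X by rewrite !inE eqxx.
have cX : c \in X by rewrite !inE eqxx orbT.
have := refl_simple_root_neq two_neq0 (cox_form_diag m c)
  (cox_form_not_odd hbc not_odd_bc).
by rewrite -(img b hab bX odd_ab) -(img c hac cX odd_ac) eqxx.
Qed.
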